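(* Let $\mathscr H$ and $\mathscr F$ be RKHSs on sets $\mathcal X$ and $\mathcal Y$ with feature maps $\phi$ and $\psi$, let $\Phi=[\phi(x_1),\dots,\phi(x_m)]$ and $\Psi=[\psi(y_1),\dots,\psi(y_n)]$ each consist of linearly independent elements, let $B\in\mathbb R^{n\times m}$, and let $S=\Psi B\Phi^\top\colon\mathscr H\to\mathscr F$. Let $G_\Phi=\Phi^\top\Phi$ and $G_\Psi=\Psi^\top\Psi$. Let $\sigma_1,\dots,\sigma_r$ be the strictly positive eigenvalues and $\begin{bsmallmatrix}\mathbf w_i\\ \mathbf z_i\end{bsmallmatrix}\in\mathbb R^{n+m}$ ($\mathbf w_i\in\mathbb R^n$, $\mathbf z_i\in\mathbb R^m$) corresponding eigenvectors of the matrix $$\begin{bmatrix}0 & BG_\Phi\\ B^\top G_\Psi & 0\end{bmatrix}\in\mathbb R^{(n+m)\times(n+m)}.$$ Then the singular value decomposition of $S$ is $$S=\sum_{i=1}^r\sigma_i\Big[\big(\|\Psi\mathbf w_i\|_{\mathscr F}^{-1}\Psi\mathbf w_i\big)\otimes\big(\|\Phi\mathbf z_i\|_{\mathscr H}^{-1}\Phi\mathbf z_i\big)\Big].$$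
   Context: An RKHS $\mathscr H$ on $\mathcal X$ with kernel $k$ has feature map $\phi(x)=k(x,\cdot)$ (similarly $\mathscr F$ with kernel $l$, feature map $\psi$). Feature matrices are row vectors: $\Phi\mathbf a=\sum_j a_j\phi(x_j)$ for $\mathbf a\in\mathbb R^m$; $\Phi^\top v=(\langle\phi(x_j),v\rangle_{\mathscr H})_j$ for $v\in\mathscr H$; $G_\Phi=(k(x_i,x_j))_{ij}$ and $G_\Psi=(l(y_i,y_j))_{ij}$ are the Gram matrices. Thus $Sv=\sum_i\psi(y_i)\sum_jb_{ij}\langle\phi(x_j),v\rangle$. The tensor product operator is $(y\otimes x)h=\langle x,h\rangle y$; a singular value decomposition $\sum_i\sigma_i(u_i\otimes v_i)$ has orthonormal systems $\{u_i\}\subseteq\mathscr F$, $\{v_i\}\subseteq\mathscr H$ and $\sigma_i>0$. *)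

From HB Require Import structures.
From mathcomp Require Import all_boot all_order all_algebra.
From mathcomp Require Import reals.
Set Implicit Arguments. Unset Strict Implicit. Unset Printing Implicit Defensive.
Import Order.TTheory GRing.Theory Num.Theory.
Local Open Scope ring_scope.

Section Defs.
Variable R : realType.

Definition inner_product (V : lmodType R) (ip : V -> V -> R) : Prop :=
  [/\ (forall u v, ip u v = ip v u),
      (forall (a : R) u v w, ip (a *: u + v) w = a * ip u w + ip v w)
    & (forall v, v != 0 -> 0 < ip v v)].

Definition ipnorm (V : lmodType R) (ip : V -> V -> R) (v : V) : R :=
  Num.sqrt (ip v v).

Definition ip_complete (V : lmodType R) (ip : V -> V -> R) : Prop :=
  forall u : nat -> V,
    (forall eps : R, 0 < eps -> exists N : nat, forall p q : nat,
        (N <= p)%N -> (N <= q)%N -> ipnorm ip (u p - u q) < eps) ->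
    exists l : V, forall eps : R, 0 < eps -> exists N : nat, forall p : nat,
        (N <= p)%N -> ipnorm ip (u p - l) < eps.

(* (V, ip) is a reproducing kernel Hilbert space on X: a Hilbert space,
   identified (through the injective map ev) with a space of functions
   X -> R, with feature map phi satisfying the reproducing property
   f(x) = <phi x, f>. *)
Definition is_rkhs (X : Type) (V : lmodType R) (ip : V -> V -> R)
    (ev : V -> X -> R) (phi : X -> V) : Prop :=
  [/\ inner_product ip, ip_complete ip, injective ev
    & (forall (f : V) (x : X), ev f x = ip (phi x) f)].

Definition kernel_of (X : Type) (V : lmodType R) (ip : V -> V -> R)
    (phi : X -> V) (x x' : X) : R := ip (phi x) (phi x').

Definition lin_indep (V : lmodType R) (m : nat) (e : 'I_m -> V) : Prop :=
  forall a : 'I_m -> R, \sum_(j < m) a j *: e j = 0 -> forall j, a j = 0.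

Definition featmat (V : lmodType R) (m : nat) (e : 'I_m -> V)
    (a : 'cV[R]_m) : V := \sum_(j < m) a j 0 *: e j.

Definition featmatT (V : lmodType R) (ip : V -> V -> R) (m : nat)
    (e : 'I_m -> V) (v : V) : 'cV[R]_m := \col_(j < m) ip (e j) v.

Definition gram (V : lmodType R) (ip : V -> V -> R) (m : nat)
    (e : 'I_m -> V) : 'M[R]_m := \matrix_(i < m, j < m) ip (e i) (e j).

Definition tensor_op (U V : lmodType R) (ipV : V -> V -> R)
    (y : U) (x : V) (h : V) : U := ipV x h *: y.

Definition orthonormal_fam (V : lmodType R) (ip : V -> V -> R) (r : nat)
    (e : 'I_r -> V) : Prop :=
  forall i j : 'I_r, ip (e i) (e j) = (i == j)%:R.

End Defs.

From HB Require Import structures.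
From mathcomp Require Import all_boot all_order all_algebra.
From mathcomp Require Import reals complex.
From mathcomp Require Import lra.
Import Order.TTheory GRing.Theory Num.Theory.
Set Implicit Arguments.
Unset Strict Implicit.
Unset Printing Implicit Defensive.
Local Open Scope ring_scope.

(* The eigenvector equations read  B G_Phi z_i = sigma_i w_i  and
   B^T G_Psi w_i = sigma_i z_i.  As the Gram matrices are symmetric,
   sigma_j <w_i, w_j> = sigma_i <z_i, z_j> for the Gram forms, so the assumed
   orthogonality of the eigenvectors splits into orthogonality of the w_i and
   of the z_i, with <w_i, w_i> = <z_i, z_i> =: q_i.  Hence
   C = sum_i sigma_i / q_i w_i z_i^T agrees with B on all eigenvectors.  If
   B <> C, then D = B - C has a singular pair: D G_Phi D^T G_Psi is self-adjoint
   and positive for the positive definite form G_Psi, so (complexifying) it has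
   a positive eigenvalue.  That pair is orthogonal to every w_i and z_i, so it
   is an eigenvector of the block matrix of B outside the span of the given
   ones, which is impossible.  Thus B = C, and
   S = Psi C Phi^T = sum_i sigma_i / q_i (Psi w_i) (x) (Phi z_i), where
   ||Psi w_i||^2 = ||Phi z_i||^2 = q_i. *)

Lemma trmxX (R : comPzRingType) n (A : 'M[R]_n) k : (A ^+ k)^T = A^T ^+ k.
Proof.
elim: k => [|k IHk]; first by rewrite !expr0 trmx1.
by rewrite exprS exprSr -!mulmxE trmx_mul IHk.
Qed.

Lemma nonzero_eigenvalue (F : closedFieldType) n (A : 'M[F]_n) :
  (forall k, A ^+ k != 0) -> exists2 l, l != 0 & eigenvalue A l.
Proof.
case: n A => [|n] A A_not_nilpotent.
  by have /eqP[] := A_not_nilpotent 0%N; apply/matrixP => -[].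
have [rs charA] := closed_field_poly_normal (char_poly A).
rewrite (monicP (char_poly_monic A)) scale1r in charA.
have [/hasP[l rs_l l_neq0] | /hasPn rs0] := boolP (has (predC1 0) rs).
  by exists l; rewrite // eigenvalue_root_char charA root_prod_XsubC.
(* Every root vanishes: char_poly A = 'X^k, so A is nilpotent. *)
have /all_pred1P rs_nseq : all (pred1 0) rs by apply/allP => l /rs0 /negPn.
have := Cayley_Hamilton A.
rewrite charA rs_nseq big_nseq subr0 iter_mulr_1 rmorphXn /= horner_mx_X.
by move/eqP; rewrite (negbTE (A_not_nilpotent _)).
Qed.

Section Realification.
Variable R : rcfType.
Local Notation Re := (@complex.Re R).
Local Notation Im := (@complex.Im R).
Local Notation toC := (real_complex R).

Lemma ReM (x y : R[i]) : Re (x * y) = Re x * Re y - Im x * Im y.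
Proof. by case: x => a b; case: y => c d; simpc. Qed.

Lemma ImM (x y : R[i]) : Im (x * y) = Re x * Im y + Im x * Re y.
Proof. by case: x => a b; case: y => c d; simpc. Qed.

Lemma realify_eigenvector n (A : 'M[R]_n) (l : R[i]) (v : 'rV[R[i]]_n) :
  v *m map_mx toC A = l *: v ->
  map_mx Re v *m A = Re l *: map_mx Re v - Im l *: map_mx Im v /\
  map_mx Im v *m A = Im l *: map_mx Re v + Re l *: map_mx Im v.
Proof.
move=> /matrixP eig; split; apply/matrixP => i j; have := eig i j; rewrite !mxE.
- move/(congr1 Re); rewrite ReM (raddf_sum (Re : Rcomplex R -> R)) => <-.
  by apply: eq_bigr => k _; rewrite !mxE /= ReM /= mulr0 subr0.
- move/(congr1 Im); rewrite ImM (raddf_sum (Im : Rcomplex R -> R)) addrC => <-.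
  by apply: eq_bigr => k _; rewrite !mxE /= ImM /= mulr0 add0r.
Qed.

Lemma complex_eigenpair n (A : 'M[R]_n) : (forall k, A ^+ k != 0) ->
  exists (al be : R) (a b : 'cV[R]_n),
    [/\ (al != 0) || (be != 0), (a != 0) || (b != 0),
        A *m a = al *: a - be *: b & A *m b = be *: a + al *: b].
Proof.
case: n A => [|n] A A_not_nilpotent.
  by have /eqP[] := A_not_nilpotent 0%N; apply/matrixP => -[].
have AcT_not_nilpotent k : map_mx toC A^T ^+ k != 0.
  by rewrite -rmorphXn /= -trmxX map_mx_eq0 trmx_eq0.
have [l l_neq0 /eigenvalueP[v eig v_neq0]] :=
  nonzero_eigenvalue AcT_not_nilpotent.
have [eigRe eigIm] := realify_eigenvector eig.
exists (Re l), (Im l), (map_mx Re v)^T, (map_mx Im v)^T; split.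
- by move: l_neq0; case: (l) => a b; rewrite eq_complex negb_and.
- move: v_neq0; apply: contraNT; rewrite negb_or !negbK !trmx_eq0.
  case/andP => /eqP/matrixP Re0 /eqP/matrixP Im0; apply/eqP/matrixP => i j.
  by move: (Re0 i j) (Im0 i j); rewrite !mxE; case: (v i j) => /= ? ? -> ->.
- by rewrite -[A]trmxK -trmx_mul eigRe linearB !linearZ.
- by rewrite -[A]trmxK -trmx_mul eigIm linearD !linearZ.
Qed.
End Realification.

Definition mxform (R : comPzRingType) n (G : 'M[R]_n) (u v : 'cV[R]_n) : R :=
  (u^T *m G *m v) 0 0.

Definition mx_posdef (R : numDomainType) n (G : 'M[R]_n) :=
  forall u, u != 0 -> 0 < mxform G u u.

Section Forms.
Variable R : comPzRingType.

Lemma mxform_is_scalar n (G : 'M[R]_n) u : scalar (mxform G u).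
Proof. by move=> a v v'; rewrite /mxform mulmxDr -scalemxAr !mxE. Qed.

HB.instance Definition _ n (G : 'M[R]_n) u :=
  GRing.isLinear.Build R 'cV[R]_n R *%R (mxform G u) (mxform_is_scalar G u).

Lemma mxformC n (G : 'M[R]_n) u v : G^T = G -> mxform G u v = mxform G v u.
Proof.
move=> G_sym; have trmx00 (M : 'M[R]_1) : M 0 0 = M^T 0 0 by rewrite mxE.
by rewrite /mxform trmx00 !trmx_mul trmxK G_sym mulmxA.
Qed.

Lemma mxformMl n (G N : 'M[R]_n) u v :
  mxform (G *m N) u v = mxform G u (N *m v).
Proof. by rewrite /mxform !mulmxA. Qed.

Lemma mxform_adj n m (GF : 'M[R]_n) (GH : 'M[R]_m) (D : 'M[R]_(n, m)) u v :
  GF^T = GF -> mxform GF u (D *m GH *m v) = mxform GH (D^T *m GF *m u) v.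
Proof. by move=> GF_sym; rewrite /mxform !trmx_mul trmxK GF_sym !mulmxA. Qed.

Lemma mulmx_outer n m (p : 'cV[R]_n) (s t : 'cV[R]_m) :
  p *m s^T *m t = (s^T *m t) 0 0 *: p.
Proof.
rewrite -mulmxA; apply/matrixP => k l.
by rewrite (ord1 l) mxE big_ord1 !mxE mulrC.
Qed.

Lemma mulmx_sum_outer n m r (c : 'I_r -> R) (p : 'I_r -> 'cV[R]_n)
    (s : 'I_r -> 'cV[R]_m) (t : 'cV[R]_m) :
  (\sum_i c i *: (p i *m (s i)^T)) *m t
  = \sum_i (c i * ((s i)^T *m t) 0 0) *: p i.
Proof.
rewrite mulmx_suml; apply: eq_bigr => i _.
by rewrite -scalemxAl mulmx_outer scalerA.
Qed.

Lemma eq0_mulmx_cV n m (A : 'M[R]_(n, m)) :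
  (forall v : 'cV_m, A *m v = 0) -> A = 0.
Proof.
move=> Av0; apply/matrixP => i j.
by have /matrixP/(_ i 0) := Av0 (delta_mx j 0); rewrite -colE !mxE.
Qed.

End Forms.

Lemma mxform_ge0 (R : numDomainType) n (G : 'M[R]_n) u :
  mx_posdef G -> 0 <= mxform G u u.
Proof.
move=> G_pd; have [->|u_neq0] := eqVneq u 0; last exact/ltW/G_pd.
by rewrite linear0.
Qed.

Section SelfAdjoint.
Variables (R : rcfType) (n : nat) (G N : 'M[R]_n).
Hypotheses (G_sym : G^T = G) (G_pd : mx_posdef G).
Hypothesis GN_sym : (G *m N)^T = G *m N.

Lemma selfadjoint_ker_sqr (v : 'cV_n) : N *m (N *m v) = 0 -> N *m v = 0.
Proof.
move=> NNv0; apply/eqP; apply: contraT => /G_pd.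
by rewrite -mxformMl (mxformC _ _ GN_sym) mxformMl NNv0 linear0 ltxx.
Qed.

Lemma selfadjoint_not_nilpotent : N != 0 -> forall k, N ^+ k != 0.
Proof.
move=> N_neq0 k; apply: contra N_neq0 => /eqP Nk0; apply/eqP.
have lower j : N ^+ j.+2 = 0 -> N ^+ j.+1 = 0.
  move=> Nj0; apply: eq0_mulmx_cV => v.
  rewrite exprS -mulmxE -mulmxA; apply: selfadjoint_ker_sqr.
  by rewrite !mulmxA mulmxE -mulrA -!exprS Nj0 mul0mx.
case: k Nk0 => [|k]; first by rewrite expr0 => N1; rewrite -[N]mulr1 N1 mulr0.
by elim: k => [|k IHk] Nk0; [rewrite expr1 in Nk0 | exact/IHk/lower].
Qed.

Lemma selfadjoint_pos_eigenvector : (forall u, 0 <= mxform (G *m N) u u) ->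
  N != 0 -> exists s (w : 'cV_n), [/\ 0 < s, w != 0 & N *m w = s *: w].
Proof.
move=> GN_psd N_neq0.
have [al [be [a [b [al_be_neq0 ab_neq0 Na Nb]]]]] :=
  complex_eigenpair (selfadjoint_not_nilpotent N_neq0).
pose q := mxform G a a + mxform G b b.
have q_gt0 : 0 < q.
  have qa_ge0 : 0 <= mxform G a a := mxform_ge0 a G_pd.
  have qb_ge0 : 0 <= mxform G b b := mxform_ge0 b G_pd.
  by case/orP: ab_neq0 => /G_pd; rewrite /q; lra.
(* Self-adjointness gives be * q = 0 and positivity then al > 0. *)
have Gba : mxform G b a = mxform G a b by rewrite mxformC.
have sym_ab := mxformC a b GN_sym.
have psd_a := GN_psd a; have psd_b := GN_psd b.
rewrite !mxformMl ?Na ?Nb ?linearD ?linearB !linearZ /= ?Gba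
  in sym_ab psd_a psd_b.
have be0 : be = 0.
  have : be * q = 0 by rewrite /q; lra.
  by move/eqP; rewrite mulf_eq0 (gt_eqF q_gt0) orbF => /eqP.
have al_gt0 : 0 < al.
  rewrite lt_def; apply/andP; split.
    by rewrite be0 eqxx orbF in al_be_neq0.
  by rewrite -(pmulr_lge0 _ q_gt0) /q; rewrite be0 in psd_a psd_b; lra.
rewrite be0 scale0r subr0 in Na; rewrite be0 scale0r add0r in Nb.
by exists al; case/orP: ab_neq0 => ?; [exists a | exists b].
Qed.

End SelfAdjoint.

Section SingularPair.
Variables (R : rcfType) (n m : nat) (GF : 'M[R]_n) (GH : 'M[R]_m).
Hypotheses (GF_sym : GF^T = GF) (GH_sym : GH^T = GH).
Hypotheses (GF_pd : mx_posdef GF) (GH_pd : mx_posdef GH).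

Lemma singular_pair_exists (D : 'M[R]_(n, m)) : D != 0 ->
  exists t (ww : 'cV_n) (zz : 'cV_m),
    [/\ 0 < t, ww != 0, D *m GH *m zz = t *: ww & D^T *m GF *m ww = t *: zz].
Proof.
move=> D_neq0; pose N := D *m GH *m D^T *m GF.
have N_quad u :
    mxform (GF *m N) u u = mxform GH (D^T *m GF *m u) (D^T *m GF *m u).
  by rewrite mxformMl -mxform_adj // /N !mulmxA.
have GN_sym : (GF *m N)^T = GF *m N.
  by rewrite /N !trmx_mul !trmxK GF_sym GH_sym !mulmxA.
have N_neq0 : N != 0.
  apply: contra D_neq0 => /eqP N0.
  have DtGF0 : D^T *m GF = 0.
    apply: eq0_mulmx_cV => u; apply/eqP; apply: contraT => /GH_pd.
    by rewrite -N_quad N0 /mxform !(mulmx0, mul0mx) mxE ltxx.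
  apply/eqP/eq0_mulmx_cV => v; apply/eqP; apply: contraT => /GF_pd.
  rewrite /mxform trmx_mul !mulmxA -(mulmxA v^T) DtGF0.
  by rewrite !(mulmx0, mul0mx) mxE ltxx.
have N_psd u : 0 <= mxform (GF *m N) u u by rewrite N_quad mxform_ge0.
have [s [ww [s_gt0 ww_neq0 Nww]]] :=
  selfadjoint_pos_eigenvector GF_sym GF_pd GN_sym N_psd N_neq0.
(* Fed back through D, the eigenvector of N for s gives the pair for sqrt s. *)
pose t := Num.sqrt s; have t_gt0 : 0 < t by rewrite sqrtr_gt0.
exists t, ww, (t^-1 *: (D^T *m GF *m ww)); split => //.
  rewrite -scalemxAr !mulmxA -/N Nww scalerA.
  by rewrite -[s](sqr_sqrtr (ltW s_gt0)) -/t expr2 mulKf // gt_eqF.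
by rewrite scalerA divff ?gt_eqF // scale1r.
Qed.

End SingularPair.

Section EigenSVD.
Variables (R : rcfType) (n m r : nat) (GF : 'M[R]_n) (GH : 'M[R]_m).
Hypotheses (GF_sym : GF^T = GF) (GH_sym : GH^T = GH).
Hypotheses (GF_pd : mx_posdef GF) (GH_pd : mx_posdef GH).
Variables (B : 'M[R]_(n, m)) (sigma : 'I_r -> R).
Variables (w : 'I_r -> 'cV[R]_n) (z : 'I_r -> 'cV[R]_m).
Hypothesis sigma_gt0 : forall i, 0 < sigma i.
Hypothesis wz_neq0 : forall i, col_mx (w i) (z i) != 0.
Hypothesis Bz : forall i, B *m GH *m z i = sigma i *: w i.
Hypothesis Bw : forall i, B^T *m GF *m w i = sigma i *: z i.
Hypothesis wz_orth : forall i j, i != j ->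
  mxform GF (w i) (w j) + mxform GH (z i) (z j) = 0.
Hypothesis w_span : forall t ww zz, 0 < t ->
  B *m GH *m zz = t *: ww -> B^T *m GF *m ww = t *: zz ->
  exists a : 'I_r -> R, ww = \sum_i a i *: w i.

Lemma eigen_cross i j :
  sigma j * mxform GF (w i) (w j) = sigma i * mxform GH (z i) (z j).
Proof.
rewrite -linearZ /= -Bz mxform_adj // Bw mxformC // linearZ /=.
by rewrite mxformC.
Qed.

Lemma eigen_orth i j : i != j ->
  mxform GF (w i) (w j) = 0 /\ mxform GH (z i) (z j) = 0.
Proof.
move=> /wz_orth wz0.
have : (sigma i + sigma j) * mxform GF (w i) (w j) = 0.
  by rewrite mulrDl eigen_cross -mulrDr wz0 mulr0.
move/eqP; rewrite mulf_eq0 gt_eqF ?addr_gt0 //= => /eqP w0.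
by split=> //; rewrite w0 add0r in wz0.
Qed.

Lemma eigen_w_neq0 i : w i != 0.
Proof.
apply: contraNneq (wz_neq0 i) => wi0; rewrite col_mx_eq0 wi0 eqxx /=.
have := Bw i; rewrite wi0 mulmx0 => /esym/eqP.
by rewrite scaler_eq0 gt_eqF.
Qed.

Lemma eigen_z_neq0 i : z i != 0.
Proof.
apply: contraNneq (wz_neq0 i) => zi0; rewrite col_mx_eq0 zi0 eqxx andbT.
have := Bz i; rewrite zi0 mulmx0 => /esym/eqP.
by rewrite scaler_eq0 gt_eqF.
Qed.

Local Notation q i := (mxform GF (w i) (w i)).

Lemma eigen_norm i : mxform GH (z i) (z i) = q i.
Proof. by apply: (mulfI (lt0r_neq0 (sigma_gt0 i))); rewrite -eigen_cross. Qed.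

Definition svd_mx := \sum_i (sigma i / q i) *: (w i *m (z i)^T).

Lemma svd_mxGH v :
  svd_mx *m GH *m v = \sum_i (sigma i / q i * mxform GH (z i) v) *: w i.
Proof.
by rewrite -mulmxA mulmx_sum_outer; apply: eq_bigr => i _; rewrite mulmxA.
Qed.

Lemma svd_mxTGF u :
  svd_mx^T *m GF *m u = \sum_i (sigma i / q i * mxform GF (w i) u) *: z i.
Proof.
rewrite /svd_mx linear_sum; under eq_bigr do rewrite linearZ /= trmx_mul trmxK.
by rewrite -mulmxA mulmx_sum_outer; apply: eq_bigr => i _; rewrite mulmxA.
Qed.

Lemma svd_mx_z j : svd_mx *m GH *m z j = sigma j *: w j.
Proof.
rewrite svd_mxGH (bigD1 j) //= eigen_norm.
rewrite divfK ?lt0r_neq0 ?GF_pd ?eigen_w_neq0 //.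
by rewrite big1 ?addr0 // => i /eigen_orth[_ ->]; rewrite mulr0 scale0r.
Qed.

Lemma svd_mx_w j : svd_mx^T *m GF *m w j = sigma j *: z j.
Proof.
rewrite svd_mxTGF (bigD1 j) //= divfK ?lt0r_neq0 ?GF_pd ?eigen_w_neq0 //.
by rewrite big1 ?addr0 // => i /eigen_orth[-> _]; rewrite mulr0 scale0r.
Qed.

Lemma B_eq_svd_mx : B = svd_mx.
Proof.
apply/eqP; rewrite -subr_eq0; apply/negPn/negP.
move=> /(singular_pair_exists GF_sym GH_sym GF_pd GH_pd).
case=> t [ww [zz [t_gt0 ww_neq0 Dzz Dww]]].
(* B - svd_mx kills every w i and z i, so its singular pair is orthogonal to
   them and is a singular pair of B outside the span of the w i. *)
have zz_orth i : mxform GH (z i) zz = 0.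
  apply: (mulfI (lt0r_neq0 t_gt0)); rewrite mulr0 -linearZ /= -Dww.
  by rewrite mxformC // -mxform_adj // !mulmxBl Bz svd_mx_z subrr linear0.
have ww_orth i : mxform GF (w i) ww = 0.
  apply: (mulfI (lt0r_neq0 t_gt0)); rewrite mulr0 -linearZ /= -Dzz.
  rewrite mxform_adj // linearB !mulmxBl Bw svd_mx_w subrr.
  by rewrite mxformC // linear0.
have svd_zz : svd_mx *m GH *m zz = 0.
  by rewrite svd_mxGH big1 // => i _; rewrite zz_orth mulr0 scale0r.
have svd_ww : svd_mx^T *m GF *m ww = 0.
  by rewrite svd_mxTGF big1 // => i _; rewrite ww_orth mulr0 scale0r.
have Bzz : B *m GH *m zz = t *: ww by rewrite -Dzz !mulmxBl svd_zz subr0.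
have Bww : B^T *m GF *m ww = t *: zz.
  by rewrite -Dww linearB !mulmxBl svd_ww subr0.
have [a ww_span] := w_span t_gt0 Bzz Bww.
have := GF_pd ww_neq0; rewrite {2}ww_span linear_sum big1 ?ltxx // => i _.
by rewrite linearZ /= mxformC // ww_orth mulr0.
Qed.

End EigenSVD.

Lemma featmat_is_linear (R : realType) (V : lmodType R) m (e : 'I_m -> V) :
  linear (featmat e).
Proof.
move=> a u v; rewrite /featmat scaler_sumr -big_split.
by apply: eq_bigr => j _; rewrite !mxE scalerDl scalerA.
Qed.

HB.instance Definition _ (R : realType) (V : lmodType R) m (e : 'I_m -> V) :=
  GRing.isLinear.Build R 'cV[R]_m V _ (featmat e) (featmat_is_linear e).

Section InnerProduct.
Variables (R : realType) (V : lmodType R) (ip : V -> V -> R).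
Hypothesis ip_inner : inner_product ip.

Lemma ipC u v : ip u v = ip v u.
Proof. by case: ip_inner. Qed.

Lemma ip_gt0 v : v != 0 -> 0 < ip v v.
Proof. by case: ip_inner => _ _; apply. Qed.

Lemma ipZDl a u v w : ip (a *: u + v) w = a * ip u w + ip v w.
Proof. by case: ip_inner. Qed.

Lemma ip0l w : ip 0 w = 0.
Proof.
have := ipZDl 1 0 0 w; rewrite scaler0 addr0 mul1r.
by rewrite -{1}[ip 0 w]addr0 => /addrI <-.
Qed.

Lemma ipDl u v w : ip (u + v) w = ip u w + ip v w.
Proof. by rewrite -[u]scale1r ipZDl mul1r scale1r. Qed.

Lemma ipZl a u w : ip (a *: u) w = a * ip u w.
Proof. by rewrite -[a *: u]addr0 ipZDl ip0l addr0. Qed.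

Lemma ipZr a u w : ip w (a *: u) = a * ip w u.
Proof. by rewrite ipC ipZl ipC. Qed.

Lemma ip_suml I (s : seq I) (F : I -> V) w :
  ip (\sum_(i <- s) F i) w = \sum_(i <- s) ip (F i) w.
Proof. exact: (big_morph (ip^~ w) (fun u v => ipDl u v w) (ip0l w)). Qed.

Lemma ip_ge0 v : 0 <= ip v v.
Proof. by have [->|/ip_gt0/ltW //] := eqVneq v 0; rewrite ip0l. Qed.

Lemma ipnorm_sqr v : ipnorm ip v ^+ 2 = ip v v.
Proof. exact/sqr_sqrtr/ip_ge0. Qed.

Lemma orthonormal_normalize r (f : 'I_r -> V) :
  (forall i j, i != j -> ip (f i) (f j) = 0) -> (forall i, f i != 0) ->
  orthonormal_fam ip (fun i => (ipnorm ip (f i))^-1 *: f i).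
Proof.
move=> f_orth f_neq0 i j; rewrite ipZl ipZr.
have [<-|ij] := eqVneq i j; last by rewrite f_orth ?mulr0.
have f_gt0 := ip_gt0 (f_neq0 i).
by rewrite mulrA -invfM -expr2 ipnorm_sqr mulVf ?gt_eqF.
Qed.

Lemma tensor_opZ (U : lmodType R) a b (y : U) (x h : V) :
  tensor_op ip (a *: y) (b *: x) h = (a * b) *: tensor_op ip y x h.
Proof. by rewrite /tensor_op ipZl !scalerA [_ * a]mulrC mulrA. Qed.

Section Features.
Variables (m : nat) (e : 'I_m -> V).

Lemma ip_featmatl a h : ip (featmat e a) h = (a^T *m featmatT ip e h) 0 0.
Proof.
by rewrite ip_suml mxE; apply: eq_bigr => j _; rewrite ipZl !mxE.
Qed.

Lemma featmatT_featmat a : featmatT ip e (featmat e a) = gram ip e *m a.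
Proof.
apply/matrixP => i k; rewrite (ord1 k) !mxE ipC ip_suml.
by apply: eq_bigr => j _; rewrite ipZl !mxE ipC mulrC.
Qed.

Lemma ip_featmat a b : ip (featmat e a) (featmat e b) = mxform (gram ip e) a b.
Proof. by rewrite ip_featmatl featmatT_featmat /mxform mulmxA. Qed.

Lemma gram_sym : (gram ip e)^T = gram ip e.
Proof. by apply/matrixP => i j; rewrite !mxE ipC. Qed.

Hypothesis e_indep : lin_indep e.

Lemma featmat_neq0 a : a != 0 -> featmat e a != 0.
Proof.
apply: contraNneq => ea0; apply/eqP/matrixP => j k.
by rewrite (ord1 k) mxE (e_indep ea0).
Qed.

Lemma gram_posdef : mx_posdef (gram ip e).
Proof. by move=> a /featmat_neq0 /ip_gt0; rewrite ip_featmat. Qed.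

End Features.

Lemma featmat_outer_tensor (U : lmodType R) n m (f : 'I_n -> U) (e : 'I_m -> V)
    (w : 'cV[R]_n) (z : 'cV[R]_m) h :
  featmat f (w *m z^T *m featmatT ip e h)
  = tensor_op ip (featmat f w) (featmat e z) h.
Proof. by rewrite mulmx_outer linearZ /tensor_op ip_featmatl. Qed.

End InnerProduct.


Lemma antidiag_eigenP {R : pzRingType} {n m} {P : 'M[R]_(n, m)}
    {Q : 'M[R]_(m, n)} {s} {a : 'cV[R]_n} {b : 'cV[R]_m} :
  block_mx 0 P Q 0 *m col_mx a b = s *: col_mx a b <->
  P *m b = s *: a /\ Q *m a = s *: b.
Proof.
rewrite mul_block_col !mul0mx add0r addr0 scale_col_mx.
by split=> [/eq_col_mx | [-> ->]].
Qed.

Lemma submx_rows_combination (R : fieldType) r k (c : 'I_r -> 'cV[R]_k)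
    (v : 'cV[R]_k) :
  (v^T <= \matrix_(i < r, j < k) c i j 0)%MS ->
  exists a : 'I_r -> R, v = \sum_i a i *: c i.
Proof.
case/submxP => D vD; exists (fun i => D 0 i); apply: trmx_inj.
rewrite vD mulmx_sum_row linear_sum; apply: eq_bigr => i _.
rewrite linearZ /=; congr (_ *: _).
by apply/matrixP => j l; rewrite !mxE (ord1 j).
Qed.

Lemma antidiag_eigen_span (R : fieldType) n m r (P : 'M[R]_(n, m))
    (Q : 'M[R]_(m, n)) (w : 'I_r -> 'cV[R]_n) (z : 'I_r -> 'cV[R]_m) s ww zz :
  (block_mx 0 P Q 0 *m col_mx ww zz = s *: col_mx ww zz ->
   ((col_mx ww zz)^T <= \matrix_(i, k) col_mx (w i) (z i) k 0)%MS) ->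
  P *m zz = s *: ww -> Q *m ww = s *: zz ->
  exists a : 'I_r -> R, ww = \sum_i a i *: w i.
Proof.
move=> span Pzz Qww.
have /antidiag_eigenP/span/submx_rows_combination[a] := conj Pzz Qww.
move/(congr1 usubmx); rewrite col_mxKu linear_sum => ->.
by exists a; apply: eq_bigr => i _; rewrite linearZ /= col_mxKu.
Qed.

Theorem theorem3p17 (R : realType) (X Y : Type)
  (H : lmodType R) (ipH : H -> H -> R) (evH : H -> X -> R) (phi : X -> H)
  (F : lmodType R) (ipF : F -> F -> R) (evF : F -> Y -> R) (psi : Y -> F)
  (rkhsH : is_rkhs ipH evH phi) (rkhsF : is_rkhs ipF evF psi)
  (m n : nat) (x : 'I_m -> X) (y : 'I_n -> Y)
  (indPhi : lin_indep (fun j => phi (x j)))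
  (indPsi : lin_indep (fun i => psi (y i)))
  (B : 'M[R]_(n, m))
  (r : nat) (sigma : 'I_r -> R) (w : 'I_r -> 'cV[R]_n) (z : 'I_r -> 'cV[R]_m)
  (* sigma_i > 0 are eigenvalues with eigenvectors [w_i; z_i] *)
  (sigma_pos : forall i, 0 < sigma i)
  (eigvec_nz : forall i, col_mx (w i) (z i) != 0)
  (eigvec : forall i,
     block_mx 0 (B *m gram ipH (fun j => phi (x j)))
              (B^T *m gram ipF (fun i => psi (y i))) 0 *m col_mx (w i) (z i)
     = sigma i *: col_mx (w i) (z i))
  (* the eigenvectors are pairwise orthogonal for diag(G_Psi, G_Phi) *)
  (eig_orth : forall i j, i != j ->
     ((w i)^T *m gram ipF (fun k => psi (y k)) *m w j
      + (z i)^T *m gram ipH (fun k => phi (x k)) *m z j) 0 0 = 0)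
  (* they exhaust all eigenvectors for strictly positive eigenvalues *)
  (eig_all : forall (s : R) (v : 'cV[R]_(n + m)), 0 < s ->
     block_mx 0 (B *m gram ipH (fun j => phi (x j)))
              (B^T *m gram ipF (fun i => psi (y i))) 0 *m v = s *: v ->
     (v^T <= \matrix_(i < r, k < n + m) col_mx (w i) (z i) k 0)%MS) :
  let Phi := featmat (fun j => phi (x j)) in
  let Psi := featmat (fun i => psi (y i)) in
  let S := fun h : H => Psi (B *m featmatT ipH (fun j => phi (x j)) h) in
  let u := fun i => (ipnorm ipF (Psi (w i)))^-1 *: Psi (w i) in
  let v := fun i => (ipnorm ipH (Phi (z i)))^-1 *: Phi (z i) in
  [/\ forall h : H, S h = \sum_(i < r) sigma i *: tensor_op ipH (u i) (v i) h,
      orthonormal_fam ipF u & orthonormal_fam ipH v].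
Proof.
move=> Phi Psi S u v.
have [ipH_inner _ _ _] := rkhsH; have [ipF_inner _ _ _] := rkhsF.
set GH := gram ipH _ in eigvec eig_orth eig_all *.
set GF := gram ipF _ in eigvec eig_orth eig_all *.
have GH_sym : GH^T = GH := gram_sym ipH_inner _.
have GF_sym : GF^T = GF := gram_sym ipF_inner _.
have GH_pd : mx_posdef GH := gram_posdef ipH_inner indPhi.
have GF_pd : mx_posdef GF := gram_posdef ipF_inner indPsi.
have Bz i : B *m GH *m z i = sigma i *: w i.
  by case/antidiag_eigenP: (eigvec i).
have Bw i : B^T *m GF *m w i = sigma i *: z i.
  by case/antidiag_eigenP: (eigvec i).
have wz_orth i j : i != j -> mxform GF (w i) (w j) + mxform GH (z i) (z j) = 0.
  by move/eig_orth; rewrite mxE.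
have w_span t ww zz t_gt0 :=
  antidiag_eigen_span (eig_all t (col_mx ww zz) t_gt0).
have orth := eigen_orth GF_sym GH_sym sigma_pos Bz Bw wz_orth.
have normPsi i : ipnorm ipF (Psi (w i)) ^+ 2 = mxform GF (w i) (w i).
  by rewrite ipnorm_sqr // ip_featmat.
have normPhi i : ipnorm ipH (Phi (z i)) = ipnorm ipF (Psi (w i)).
  by rewrite /ipnorm !ip_featmat // (eigen_norm GF_sym GH_sym sigma_pos Bz Bw).
split.
- move=> h; rewrite /S /Psi (B_eq_svd_mx GF_sym GH_sym GF_pd GH_pd sigma_pos
    eigvec_nz Bz Bw wz_orth w_span) /svd_mx mulmx_suml linear_sum.
  apply: eq_bigr => i _; rewrite -scalemxAl linearZ /= featmat_outer_tensor //.
  rewrite /u /v tensor_opZ // /tensor_op !scalerA.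
  by rewrite normPhi -invfM -expr2 normPsi.
- apply: orthonormal_normalize => // [i j /orth[wij _]|i].
    by rewrite /Psi ip_featmat.
  exact/featmat_neq0/(eigen_w_neq0 sigma_pos eigvec_nz Bw).
- apply: orthonormal_normalize => // [i j /orth[_ zij]|i].
    by rewrite /Phi ip_featmat.
  exact/featmat_neq0/(eigen_z_neq0 sigma_pos eigvec_nz Bz).
Qed.
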